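(* Let $P$ be a finite set of points in $\mathbb{R}^2$ in general position. Any point $p\in P$ is active for at most three points on the first convex layer of $P$.
   Context: Convex layers: $L^1$ is the set of vertices of the convex hull of $P$, and $L^k$ is the set of vertices of the convex hull of $P\setminus(L^1\cup\dots\cup L^{k-1})$. Let $(t,u,v)$ be consecutive points of $L^1$ in clockwise order. A point $p$ is active for $u$ if, upon deleting $u$ from $P$ and recomputing the first and second convex layers, $p$ moves to the first layer. $A(u)$ denotes the set of points active for $u$. *)

From mathcomp Require Import all_boot all_order all_algebra.
From mathcomp Require Import boolp classical_sets cardinality.
Set Implicit Arguments. Unset Strict Implicit. Unset Printing Implicit Defensive.
Import Order.TTheory GRing.Theory Num.Theory.
Local Open Scope ring_scope.
Local Open Scope classical_set_scope.

Section Layers.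
Variable R : realFieldType.

Definition pt2 := (R * R)%type.

Definition orient (a b c : pt2) : R :=
  (b.1 - a.1) * (c.2 - a.2) - (b.2 - a.2) * (c.1 - a.1).

Definition general_position (P : set pt2) : Prop :=
  forall a b c, P a -> P b -> P c -> a <> b -> b <> c -> a <> c ->
    orient a b c != 0.

Definition in_hull (S : set pt2) (x : pt2) : Prop :=
  exists (n : nat) (s : 'I_n -> pt2) (w : 'I_n -> R),
    [/\ forall i, S (s i),
        forall i, 0 <= w i,
        \sum_(i < n) w i = 1 &
        x = (\sum_(i < n) w i * (s i).1, \sum_(i < n) w i * (s i).2)].

Definition hull_vertices (S : set pt2) : set pt2 :=
  [set x | S x /\ ~ in_hull (S `\ x) x].

(* remaining S k = S \ (L^1 u ... u L^k) *)
Fixpoint remaining (S : set pt2) (k : nat) : set pt2 :=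
  match k with
  | 0 => S
  | k'.+1 => remaining S k' `\` hull_vertices (remaining S k')
  end.

(* layer S k = L^k (k >= 1); layer S 1 = L^1 = vertices of conv(S) *)
Definition layer (S : set pt2) (k : nat) : set pt2 :=
  hull_vertices (remaining S k.-1).

Definition active (P : set pt2) (u p : pt2) : Prop :=
  [/\ layer P 1 u, P p, ~ layer P 1 p & layer (P `\ u) 1 p].

End Layers.

From mathcomp Require Import all_boot all_order all_algebra.
From mathcomp Require Import boolp classical_sets cardinality.
From mathcomp Require Import ring.
Set Implicit Arguments. Unset Strict Implicit. Unset Printing Implicit Defensive.
Import Order.TTheory GRing.Theory Num.Theory.
Local Open Scope ring_scope.
Local Open Scope classical_set_scope.

(* If u is active for p, then p is not a hull vertex of P but is one of P \ u:
   p lies in the convex hull of P \ p, and every convex combination of P \ p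
   equal to p puts positive weight on u.  Four points u1, ..., u4 of the plane
   are affinely dependent, with the orientation cofactors as coefficients; by
   general position these are nonzero.  Shifting the weights of a combination
   along this dependence, as in the proof of Caratheodory's theorem, removes
   one of the u_i from it, so no four points can be active for p. *)

Lemma seq_argmin (T : eqType) d (O : orderType d) (f : T -> O) (s : seq T) x0 :
  x0 \in s -> exists2 x, x \in s & forall y, y \in s -> (f x <= f y)%O.
Proof.
elim: s x0 => // a [|b s] IH _ _.
  by exists a => [|y]; rewrite ?mem_seq1 // => /eqP->.
have [m ms m_min] := IH b (mem_head b s).
have [am|ma] := leP (f a) (f m).
  exists a => [|y]; first exact: mem_head.
  by rewrite inE => /predU1P[->//|ys]; apply: le_trans am (m_min y ys).
exists m => [|y]; first by rewrite inE ms orbT.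
by rewrite inE => /predU1P[->|]; [apply: ltW | apply: m_min].
Qed.

Section ConvexCombinations.
Variable R : realFieldType.
Notation pt := (pt2 R).

Definition convex_comb (S : set pt) (x : pt) (l : seq (R * pt)) :=
  [/\ forall z, z \in l -> S z.2 /\ 0 <= z.1,
      \sum_(z <- l) z.1 = 1 &
      x = (\sum_(z <- l) z.1 * z.2.1, \sum_(z <- l) z.1 * z.2.2)].

Lemma in_hullP (S : set pt) x : in_hull S x <-> exists l, convex_comb S x l.
Proof.
split=> [[n [s [w [Ss w_ge0 w1 ->]]]]|[l [Sl l1 ->]]].
  exists [seq (w i, s i) | i <- index_enum 'I_n].
  split=> [z /mapP[i _ ->]||]; rewrite ?big_map //.
  exact: conj (Ss i) (w_ge0 i).
pose d : R * pt := (0, (0, 0)).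
have sumE F : \sum_(z <- l) F z = \sum_(i < size l) F (nth d l i).
  by rewrite (big_nth d) big_mkord.
exists (size l), (fun i => (nth d l i).2), (fun i => (nth d l i).1).
split=> [i|i||]; rewrite -?l1 ?sumE //.
all: by have [] := Sl _ (mem_nth d (ltn_ord i)).
Qed.

Lemma in_hullS (A B : set pt) x : A `<=` B -> in_hull A x -> in_hull B x.
Proof.
by move=> AB [n [s [w [As ?]]]]; exists n, s, w; split=> // i; apply: AB.
Qed.

Definition weight_at (l : seq (R * pt)) (u : pt) := \sum_(z <- l | z.2 == u) z.1.

Lemma sum_weight_at (l : seq (R * pt)) (U : seq pt) (g : pt -> R) : uniq U ->
  \sum_(z <- l | z.2 \in U) z.1 * g z.2 = \sum_(u <- U) weight_at l u * g u.
Proof.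
elim: U => [_|u U IH /andP[uU uniqU]]; first by rewrite big_nil big_pred0.
rewrite big_cons -IH // (bigID (fun z => z.2 == u)) /= /weight_at mulr_suml.
congr (_ + _); apply: eq_big => // z; rewrite inE.
- by case: (z.2 == u); rewrite ?andbF.
- by case/andP=> _ /eqP->.
- by case: eqP => [->|]; rewrite ?(negbTE uU) ?andbT.
Qed.

Lemma weight_at_ge0 (l : seq (R * pt)) u :
  (forall z, z \in l -> 0 <= z.1) -> 0 <= weight_at l u.
Proof.
by move=> l_ge0; rewrite /weight_at big_seq_cond sumr_ge0 // => z /andP[/l_ge0].
Qed.

Definition affine_dependence (U : seq pt) (c : pt -> R) :=
  [/\ \sum_(u <- U) c u = 0, \sum_(u <- U) c u * u.1 = 0 &
      \sum_(u <- U) c u * u.2 = 0].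

Section WeightShift.
Variables (S : set pt) (x k : pt) (l : seq (R * pt)) (U : seq pt) (c : pt -> R).
Hypotheses (uniqU : uniq U) (SU : forall u, u \in U -> S u).
Hypotheses (lx : convex_comb S x l) (c_dep : affine_dependence U c).
Hypotheses (kU : k \in U) (ck_gt0 : 0 < c k).
Hypothesis k_min :
  forall u, u \in U -> 0 < c u -> weight_at l k / c k <= weight_at l u / c u.

(* The largest step along -c keeping every weight nonnegative; it empties k. *)
Let t := weight_at l k / c k.
Let l' := [seq z <- l | z.2 \notin U] ++
          [seq (weight_at l u - t * c u, u) | u <- rem k U].

Let shift_moment (g : pt -> R) : \sum_(u <- U) c u * g u = 0 ->
  \sum_(z <- l') z.1 * g z.2 = \sum_(z <- l) z.1 * g z.2.
Proof.
move=> cg; rewrite big_cat big_filter big_map.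
rewrite [RHS](bigID (fun z => z.2 \in U)) /=.
rewrite addrC sum_weight_at //; congr (_ + _).
have -> : \sum_(u <- U) weight_at l u * g u =
          \sum_(u <- U) (weight_at l u - t * c u) * g u.
  under [RHS]eq_bigr => u _ do rewrite mulrBl -mulrA.
  by rewrite sumrB -mulr_sumr cg mulr0 subr0.
by rewrite [RHS](big_rem k) //= /t divfK ?gt_eqF // subrr mul0r add0r.
Qed.

Let shift_support z : z \in l' -> (S `\ k) z.2 /\ 0 <= z.1.
Proof.
have [Sl _ _] := lx.
rewrite mem_cat => /orP[|/mapP[u]].
  rewrite mem_filter => /andP[zU /Sl[Sz z_ge0]]; split=> //; split=> // zk.
  by rewrite zk kU in zU.
rewrite mem_rem_uniq // inE => /andP[uk uU] -> /=.
split; first by split; [exact: SU | exact/eqP].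
have weight_ge0 v : 0 <= weight_at l v by apply: weight_at_ge0 => y /Sl[].
rewrite subr_ge0; have [cu_le0|cu_gt0] := leP (c u) 0.
  apply: le_trans (weight_ge0 u); apply: mulr_ge0_le0 cu_le0.
  by rewrite divr_ge0 // ltW.
by rewrite -ler_pdivlMr // k_min.
Qed.

Lemma in_hull_setD_min_ratio : in_hull (S `\ k) x.
Proof.
have [_ l1 ->] := lx; have [c1 cx cy] := c_dep.
apply/in_hullP; exists l'; split; first exact: shift_support.
  rewrite -l1 -!(eq_bigr _ (fun z _ => mulr1 z.1)) (@shift_moment (fun=> 1)) //.
  by rewrite (eq_bigr _ (fun u _ => mulr1 (c u))).
by rewrite (@shift_moment fst) ?(@shift_moment snd).
Qed.

End WeightShift.

Lemma in_hull_setD_dependent (S : set pt) x (U : seq pt) (c : pt -> R) :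
    uniq U -> (forall u, u \in U -> S u) -> affine_dependence U c ->
    (exists2 u, u \in U & 0 < c u) -> in_hull S x ->
  exists2 k, k \in U & in_hull (S `\ k) x.
Proof.
move=> uniqU SU c_dep [u uU cu_gt0] /in_hullP[l lx].
have posU : u \in [seq v <- U | 0 < c v] by rewrite mem_filter cu_gt0.
have [k] := seq_argmin (fun v => weight_at l v / c v) posU.
rewrite mem_filter => /andP[ck_gt0 kU] k_min; exists k => //.
apply: (in_hull_setD_min_ratio uniqU SU lx c_dep kU ck_gt0) => v vU cv_gt0.
by apply: k_min; rewrite mem_filter cv_gt0.
Qed.

Lemma four_point_dependence (u1 u2 u3 u4 : pt) :
    uniq [:: u1; u2; u3; u4] -> orient u1 u2 u3 != 0 ->
  exists2 c, affine_dependence [:: u1; u2; u3; u4] c & 0 < c u4.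
Proof.
rewrite /= !in_cons !in_nil !orbF !negb_or andbT.
case/and3P=> /and3P[n12 n13 n14] /andP[n23 n24] n34 o123.
(* Cramer's rule for the rows (1, u_i); s makes the last coefficient positive. *)
pose s := - Num.sg (orient u1 u2 u3).
exists (fun z => s * if z == u1 then orient u2 u3 u4
                     else if z == u2 then - orient u1 u3 u4
                     else if z == u3 then orient u1 u2 u4
                     else - orient u1 u2 u3).
  rewrite /affine_dependence !big_cons !big_nil /= eqxx.
  rewrite (ifN_eqC _ _ n12) (ifN_eqC _ _ n13) (ifN_eqC _ _ n14).
  rewrite (ifN_eqC _ _ n23) (ifN_eqC _ _ n24) (ifN_eqC _ _ n34) !eqxx /= /orient.
  by split; ring.
rewrite /= (ifN_eqC _ _ n14) (ifN_eqC _ _ n24) (ifN_eqC _ _ n34).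
by rewrite mulNr mulrN opprK -normrEsg normr_gt0.
Qed.

Lemma in_hull_setD_one_of_four (S : set pt) x (u1 u2 u3 u4 : pt) :
    general_position S -> uniq [:: u1; u2; u3; u4] ->
    (forall u, u \in [:: u1; u2; u3; u4] -> S u) -> in_hull S x ->
  exists2 k, k \in [:: u1; u2; u3; u4] & in_hull (S `\ k) x.
Proof.
move=> gpS uniqU SU xS.
have o123 : orient u1 u2 u3 != 0.
  move: uniqU; rewrite /= !in_cons !negb_or.
  case/and3P=> /and3P[n12 n13 _] /andP[n23 _] _.
  have [S1 S2 S3] : [/\ S u1, S u2 & S u3].
    by split; apply: SU; rewrite !in_cons eqxx ?orbT.
  by apply: gpS => //; apply/eqP.
have [c c_dep c4_gt0] := four_point_dependence uniqU o123.
apply: (in_hull_setD_dependent uniqU SU c_dep) xS.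
by exists u4; rewrite // !in_cons eqxx !orbT.
Qed.

End ConvexCombinations.

Lemma active_hull (R : realFieldType) (P : set (pt2 R)) u p : active P u p ->
  [/\ (P `\ p) u, in_hull (P `\ p) p & ~ in_hull ((P `\ p) `\ u) p].
Proof.
case=> [[Pu _] Pp not_vertex_p [[_ up] p_vertex]]; split.
- by split=> // pu; apply: up; rewrite pu.
- by apply: contrapT => p_vertex'; apply: not_vertex_p.
- apply: contra_not p_vertex; apply: in_hullS.
  by move=> y [[Py yp] yu]; split; [split|].
Qed.

Theorem lemma1 (R : realFieldType) (P : set (pt2 R)) :
  finite_set P -> general_position P ->
  forall (p : pt2 R), P p ->
  forall (us : seq (pt2 R)), uniq us ->
    (forall u, u \in us -> layer P 1 u /\ active P u p) ->
    (size us <= 3)%N.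
Proof.
move=> _ gpP p _ us.
case: us => [|u1 [|u2 [|u3 [|u4 us]]]] // uniq_us act_us; exfalso.
set U := [:: u1; u2; u3; u4].
have uniqU : uniq U.
  by move: uniq_us; rewrite -[_ :: _]/(U ++ us) cat_uniq => /andP[].
have actU u : u \in U ->
    [/\ (P `\ p) u, in_hull (P `\ p) p & ~ in_hull ((P `\ p) `\ u) p].
  move=> uU; apply: active_hull; apply: (proj2 (act_us u _)).
  by rewrite -[_ :: _]/(U ++ us) mem_cat uU.
have gpPp : general_position (P `\ p).
  by move=> a b c [Pa _] [Pb _] [Pc _]; apply: gpP.
have PpU u : u \in U -> (P `\ p) u by case/actU.
have [_ pP _] := actU u1 (mem_head _ _).
have [k kU] := in_hull_setD_one_of_four gpPp uniqU PpU pP.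
by have [_ _] := actU k kU.
Qed.
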